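(* Let $f_{SG}(x)=\sqrt{\frac{x^2+1}{2}}-\sqrt x$ for $x\in(0,\infty)$, let $f_{SG}^*(u)=u\,f_{SG}\!\left(\frac{1-u}{u}\right)$ for $u\in(0,1)$, extended by continuity to $[0,1]$ (explicitly $f_{SG}^*(u)=\frac{\sqrt2}{2}\sqrt{u^2+(1-u)^2}-\sqrt{u(1-u)}$), and define $\overline M_{SG}(C_1,C_2)=E_X\{f_{SG}^*(P(C_2\mid x))\}$. Then $$P_e\le \frac12\left[1-\frac{2}{\sqrt2}\,\overline M_{SG}(C_1,C_2)\right].$$
   Context: Two-class decision problem: classes $C_1,C_2$, an observation $x$ in a space $\mathrm X$ with density $p(x)$, and a posteriori probabilities $P(C_1\mid x),P(C_2\mid x)\ge0$ with $P(C_1\mid x)+P(C_2\mid x)=1$. $E_X\{g(x)\}=\int_{\mathrm X} g(x)p(x)\,dx$. $P_e=E_X\{\min(P(C_1\mid x),P(C_2\mid x))\}$ is the Bayesian probability of error. *)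

From HB Require Import structures.
From mathcomp Require Import all_boot all_order all_algebra.
From mathcomp Require Import all_classical all_reals all_analysis.
Set Implicit Arguments. Unset Strict Implicit. Unset Printing Implicit Defensive.
Import Order.TTheory GRing.Theory Num.Theory.
Local Open Scope ring_scope.

Definition fSG {R : realType} (x : R) : R :=
  Num.sqrt ((x ^+ 2 + 1) / 2) - Num.sqrt x.

(* f*_SG(u) = u f_SG((1-u)/u) on (0,1), extended by continuity to [0,1]
   using the explicit closed form at the endpoints (and, irrelevantly,
   outside [0,1]). *)
Definition fSGstar {R : realType} (u : R) : R :=
  if (0 < u) && (u < 1) then u * fSG ((1 - u) / u)
  else Num.sqrt 2 / 2 * Num.sqrt (u ^+ 2 + (1 - u) ^+ 2)
       - Num.sqrt (u * (1 - u)).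

(* E_X{g} = \int_X g(x) p(x) dmu(x), p a density w.r.t. reference measure mu *)
Definition EX {d} {T : measurableType d} {R : realType}
  (mu : {measure set T -> \bar R}) (p : T -> R) (g : T -> R) : R :=
  Rintegral mu setT (fun x => g x * p x).

Definition Pe {d} {T : measurableType d} {R : realType}
  (mu : {measure set T -> \bar R}) (p P1 P2 : T -> R) : R :=
  EX mu p (fun x => Order.min (P1 x) (P2 x)).

Definition MSG {d} {T : measurableType d} {R : realType}
  (mu : {measure set T -> \bar R}) (p P2 : T -> R) : R :=
  EX mu p (fun x => fSGstar (P2 x)).

(** With s := u (1 - u), the closed form of f*_SG is
    sqrt ((1 - 2 s) / 2) - sqrt s, while m := |1/2 - u| satisfies m^2 = 1/4 - s.
    Squaring shows sqrt ((1 - 2 s) / 2) <= sqrt 2 m + sqrt s, that is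
    f*_SG(u) <= sqrt 2 (1/2 - min(u, 1 - u)).  Taking u := P(C_2 | x) and
    integrating against the probability density p gives the bound. *)

From HB Require Import structures.
From mathcomp Require Import all_boot all_order all_algebra.
From mathcomp Require Import all_classical all_reals all_analysis.
From mathcomp Require Import ring lra measurable_realfun.
Import Order.TTheory GRing.Theory Num.Theory.
Local Open Scope ring_scope.

Section PointwiseBound.
Variable R : realType.
Implicit Types u s m : R.

Lemma sqrt2_half_mulr_sqrt s : Num.sqrt 2 / 2 * Num.sqrt s = Num.sqrt (s / 2).
Proof.
have sqrt2_neq0 : Num.sqrt 2 != 0 :> R by rewrite gt_eqF // sqrtr_gt0.
have half_sqrt2 : Num.sqrt 2 / 2 = Num.sqrt (2^-1) :> R.
  rewrite sqrtrV // -[in X in _ / X](sqr_sqrtr (_ : 0 <= 2 :> R)) //.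
  by field.
by rewrite half_sqrt2 -sqrtrM // mulrC.
Qed.

Lemma fSGstarE u :
  fSGstar u = Num.sqrt ((u ^+ 2 + (1 - u) ^+ 2) / 2) - Num.sqrt (u * (1 - u)).
Proof.
rewrite /fSGstar /fSG sqrt2_half_mulr_sqrt; case: ifP => // /andP[u_gt0 u_lt1].
have u_neq0 : u != 0 by rewrite gt_eqF.
have mul_sqrt X : 0 <= X -> u * Num.sqrt X = Num.sqrt (u ^+ 2 * X).
  by move=> X_ge0; rewrite sqrtrM ?sqr_ge0 // sqrtr_sqr ger0_norm // ltW.
rewrite mulrBr !mul_sqrt; last 2 first.
- by apply: divr_ge0; lra.
- by apply: divr_ge0 => //; apply: addr_ge0 => //; exact: sqr_ge0.
by congr (Num.sqrt _ - Num.sqrt _); field.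
Qed.

Lemma sqrt_half_le s m : 0 <= s -> 0 <= m -> m ^+ 2 = 4^-1 - s ->
  Num.sqrt ((1 - 2 * s) / 2) <= Num.sqrt 2 * m + Num.sqrt s.
Proof.
move=> s_ge0 m_ge0 m2.
have rhs_ge0 : 0 <= Num.sqrt 2 * m + Num.sqrt s.
  by rewrite addr_ge0 ?mulr_ge0 ?sqrtr_ge0.
have rhs2 : (Num.sqrt 2 * m + Num.sqrt s) ^+ 2
    = (1 - 2 * s) / 2 + 2 * (Num.sqrt 2 * m * Num.sqrt s).
  by rewrite sqrrD exprMn !sqr_sqrtr // m2; field.
have lhs_ge0 : 0 <= (1 - 2 * s) / 2.
  by have := sqr_ge0 m; rewrite m2; lra.
rewrite -ler_sqr ?nnegrE ?sqrtr_ge0 // sqr_sqrtr // rhs2 lerDl.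
by rewrite !mulr_ge0 ?sqrtr_ge0.
Qed.

Lemma fSGstar_le u : 0 <= u <= 1 -> fSGstar u <= Num.sqrt 2 * `|2^-1 - u|.
Proof.
move=> /andP[u_ge0 u_le1].
have s_ge0 : 0 <= u * (1 - u) by rewrite mulr_ge0 // subr_ge0.
have m2 : `|2^-1 - u| ^+ 2 = 4^-1 - u * (1 - u).
  by rewrite real_normK ?num_real //; field.
rewrite fSGstarE lerBlDr.
have -> : u ^+ 2 + (1 - u) ^+ 2 = 1 - 2 * (u * (1 - u)) by ring.
exact: sqrt_half_le.
Qed.

Lemma min_subr_half u : Order.min (1 - u) u = 2^-1 - `|2^-1 - u|.
Proof.
rewrite /Order.min; case: ltP => cmp.
- have /ler0_norm -> : 2^-1 - u <= 0 by lra.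
  lra.
- have /ger0_norm -> : 0 <= 2^-1 - u by lra.
  lra.
Qed.

Lemma min_add_fSGstar_le u : 0 <= u <= 1 ->
  Order.min (1 - u) u + (Num.sqrt 2)^-1 * fSGstar u <= 2^-1.
Proof.
move=> u01; have sqrt2_gt0 : 0 < Num.sqrt 2 :> R by rewrite sqrtr_gt0.
rewrite min_subr_half -lerBrDl opprB addrC subrK mulrC ler_pdivrMr //.
by rewrite mulrC; exact: fSGstar_le.
Qed.

Lemma norm_fSGstar_le u : 0 <= u <= 1 -> `|fSGstar u| <= 2.
Proof.
move=> /andP[u_ge0 u_le1].
have sqrt_le1 (X : R) : X <= 1 -> Num.sqrt X <= 1.
  by move=> X_le1; rewrite -sqrtr1 ler_sqrt.
have a_le1 : Num.sqrt ((u ^+ 2 + (1 - u) ^+ 2) / 2) <= 1 by apply: sqrt_le1; nra.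
have b_le1 : Num.sqrt (u * (1 - u)) <= 1 by apply: sqrt_le1; nra.
rewrite fSGstarE (le_trans (ler_normB _ _)) // !ger0_norm ?sqrtr_ge0 //.
lra.
Qed.

Lemma measurable_fSGstar : measurable_fun setT (@fSGstar R).
Proof.
have msqrt : measurable_fun setT (@Num.sqrt R).
  exact: continuous_measurable_fun (@sqrt_continuous R).
have m1B : measurable_fun setT (fun u : R => 1 - u).
  by apply: measurable_funB => //; exact: measurable_cst.
have -> : @fSGstar R = fun u =>
    Num.sqrt ((u ^+ 2 + (1 - u) ^+ 2) / 2) - Num.sqrt (u * (1 - u)).
  by apply/funext => u; exact: fSGstarE.
apply: measurable_funB; apply: (measurableT_comp msqrt).
- apply: measurable_funM; last exact: measurable_cst.
  by apply: measurable_funD; exact: measurable_funX.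
- exact: measurable_funM.
Qed.

End PointwiseBound.

Section Expectation.
Context {d} {T : measurableType d} {R : realType}.
Variables (mu : {measure set T -> \bar R}) (p : T -> R).
Hypothesis p_ge0 : forall x, 0 <= p x.
Hypothesis p_int : mu.-integrable setT (fun x => (p x)%:E).
Hypothesis p_norm : Rintegral mu setT p = 1.

Lemma integrable_mul_density (h : T -> R) (C : R) :
  measurable_fun setT h -> (forall x, `|h x| <= C) ->
  mu.-integrable setT (EFin \o (fun x => h x * p x)).
Proof.
move=> mh h_le; have h_bounded : [bounded h x | x in setT].
  exists C; split; first exact: num_real.
  by move=> M CM y _; exact: le_trans (h_le y) (ltW CM).
have := integrableMl measurableT p_int mh h_bounded.
by congr (mu.-integrable _ _); apply/funext => x /=; rewrite mulrC.
Qed.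

Lemma EX_affine_le (g h : T -> R) (Cg Ch c b : R) :
  measurable_fun setT g -> (forall x, `|g x| <= Cg) ->
  measurable_fun setT h -> (forall x, `|h x| <= Ch) ->
  (forall x, g x + c * h x <= b) ->
  EX mu p g + c * EX mu p h <= b.
Proof.
move=> mg g_le mh h_le gh_le.
have gp_int := integrable_mul_density _ _ mg g_le.
have hp_int := integrable_mul_density _ _ mh h_le.
have scale_int k f : mu.-integrable setT (EFin \o f) ->
    mu.-integrable setT (EFin \o (fun x => k * f x)).
  by move=> f_int; apply: eq_integrable (integrableZl measurableT k f_int).
rewrite /EX -RintegralZl // -RintegralD ?scale_int //.
rewrite -[b in _ <= b]mulr1 -p_norm -RintegralZl //.
apply: le_Rintegral => // [||x _].
- exact: eq_integrable (integrableD measurableT gp_int (scale_int c _ hp_int)).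
- exact: scale_int.
- by rewrite mulrA -mulrDl ler_wpM2r.
Qed.
End Expectation.

Theorem mainTheorem5 (d : measure_display) (T : measurableType d) (R : realType)
  (mu : {measure set T -> \bar R}) (p P1 P2 : T -> R)
  (p_meas : measurable_fun setT p)
  (p_ge0 : forall x, 0 <= p x)
  (p_int : mu.-integrable setT (fun x => (p x)%:E))
  (p_norm : Rintegral mu setT p = 1)
  (P1_meas : measurable_fun setT P1) (P2_meas : measurable_fun setT P2)
  (P1_ge0 : forall x, 0 <= P1 x) (P2_ge0 : forall x, 0 <= P2 x)
  (P_sum : forall x, P1 x + P2 x = 1) :
  Pe mu p P1 P2 <= 2^-1 * (1 - 2 / Num.sqrt 2 * MSG mu p P2).
Proof.
have P2_01 x : 0 <= P2 x <= 1 by rewrite P2_ge0 -(P_sum x) lerDr P1_ge0.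
have P1E x : P1 x = 1 - P2 x by rewrite -(P_sum x) addrK.
have min_le1 x : `|Order.min (P1 x) (P2 x)| <= 1.
  rewrite ger0_norm; last by rewrite le_min P1_ge0 P2_ge0.
  by rewrite ge_min; case/andP: (P2_01 x) => _ ->; rewrite orbT.
suff bound : Pe mu p P1 P2 + (Num.sqrt 2)^-1 * MSG mu p P2 <= 2^-1.
  have sqrt2_neq0 : Num.sqrt 2 != 0 :> R by rewrite gt_eqF // sqrtr_gt0.
  have -> : 2^-1 * (1 - 2 / Num.sqrt 2 * MSG mu p P2)
    = 2^-1 - (Num.sqrt 2)^-1 * MSG mu p P2 by field.
  by rewrite lerBrDr.
apply: (EX_affine_le _ _ p_ge0 p_int p_norm).
- exact: measurable_minr.
- exact: min_le1.
- have := measurableT_comp (@measurable_fSGstar R) P2_meas; exact.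
- by move=> x; exact: norm_fSGstar_le.
- by move=> x; rewrite P1E; exact: min_add_fSGstar_le.
Qed.
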